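(* Let $\mathcal V$ be a vector space partition of $\mathbb F_2^8$ such that $\dim(V)$ is even for all $V\in\mathcal V$. Then $\mathcal V$ has one of the types $[8^1]$, $[2^{64},6^1]$, or $[2^{5i},4^{17-i}]$ for some $0\le i\le17$. Moreover, vector space partitions of $\mathbb F_2^8$ of each of these types exist.
   Context: A vector space partition of $\mathbb F_2^n$ is a set of nonzero subspaces such that every nonzero vector lies in exactly one of them. It has type $[d_1^{n_1},\dots,d_k^{n_k}]$ (with $d_1<\dots<d_k$) if it contains exactly $n_i$ subspaces of dimension $d_i$ and no others. *)

From HB Require Import structures.
From mathcomp Require Import all_boot all_order all_algebra.
Set Implicit Arguments. Unset Strict Implicit. Unset Printing Implicit Defensive.
Import GRing.Theory.
Local Open Scope ring_scope.

Notation F2n n := 'rV['F_2]_n.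

Definition vs_partition (n : nat) (P : seq {vspace F2n n}) : Prop :=
  [/\ uniq P,
      (forall U, U \in P -> U != 0%VS) &
      (forall v : F2n n, v != 0 ->
         (exists2 U, U \in P & v \in U) /\
         (forall U1 U2, U1 \in P -> U2 \in P -> v \in U1 -> v \in U2 -> U1 = U2))].

(* P has type [d_1^{n_1}, ..., d_k^{n_k}] given as list t of pairs (d_i, n_i):
   for each dimension d, the number of members of P of dimension d equals the
   listed multiplicity (0 if d is not listed). *)
Definition has_type (n : nat) (P : seq {vspace F2n n}) (t : seq (nat * nat)) : Prop :=
  forall d : nat, count (fun U => \dim U == d)%N P = (\sum_(p <- t | p.1 == d) p.2)%N.

(* Counting nonzero vectors gives sum_(U in P) (2^(dim U) - 1) = 2^8 - 1, and distinct
   members of P meet trivially, so any two of their dimensions add up to at most 8.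
   With all dimensions in {2, 4, 6, 8} this leaves a single 8-space; one 6-space, which
   excludes further 6- and 4-spaces, and 64 planes; or 17 - i spaces of dimension 4 and
   5 i planes. For existence write F_2^8 = F_16^2: its 17 F_16-lines form a spread of
   4-spaces, each of which splits into its five F_4-lines, while the F_4-hyperplane
   F_16 x F_4 together with the 64 F_4-lines outside it has type [2^64, 6^1]. *)

From Stdlib Require PeanoNat.
From HB Require Import structures.
From mathcomp Require Import all_boot all_order all_algebra finfield zify.
Set Implicit Arguments. Unset Strict Implicit. Unset Printing Implicit Defensive.
Import GRing.Theory.

Lemma pairwise_perm (T : eqType) (r : rel T) (s1 s2 : seq T) :
  symmetric r -> perm_eq s1 s2 -> pairwise r s1 = pairwise r s2.
Proof.
move=> r_sym; have pairwise_rem x s : x \in s -> pairwise r s = pairwise r (x :: rem x s).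
  elim: s => // y s IHs; rewrite inE /=; have [->|neq_yx] //= := eqVneq y x.
  move=> xs; rewrite IHs //= (perm_all _ (perm_to_rem xs)) /= (r_sym y x).
  by case: (r x y); case: (all (r x) _); case: (all (r y) _).
elim: s1 s2 => [|x s1 IHs1] s2 eq12; first by move: eq12; rewrite perm_sym => /perm_nilP ->.
have xs2 : x \in s2 by rewrite -(perm_mem eq12) mem_head.
have eq1r : perm_eq s1 (rem x s2).
  by rewrite -(perm_cons x) -(permPr (perm_to_rem xs2)).
by rewrite (pairwise_rem x s2 xs2) /= (IHs1 _ eq1r) (perm_all _ eq1r).
Qed.

Lemma pairwise_sym_neq (T : eqType) (r : rel T) (s : seq T) :
  symmetric r -> pairwise r s -> {in s &, forall x y, x != y -> r x y}.
Proof.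
move=> r_sym pair_s; have: all2rel (fun x y => (x == y) || r x y) s.
  rewrite -pairwise_all2rel => [|x|x y]; last by rewrite eq_sym r_sym.
    by apply: sub_pairwise pair_s => x y /= ->; rewrite orbT.
  by rewrite eqxx.
by move/allrelP=> all2_s x y sx sy /negbTE neq_xy; have := all2_s x y sx sy; rewrite neq_xy.
Qed.

Lemma perm_tally_count (T : eqType) (S s : seq T) :
  uniq S -> {subset s <= S} ->
  perm_eq s (tally_seq [seq (x, count_mem x s) | x <- S]).
Proof.
move=> uS sS; apply/allP=> x _; apply/eqP.
rewrite /tally_seq count_flatten -!map_comp sumnE big_map.
under eq_bigr => y _ do rewrite /= count_nseq.
have [xS | xNS] := boolP (x \in S).
  rewrite (perm_big _ (perm_to_rem xS)) big_cons /= eqxx mul1n big1_seq ?addn0 //.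
  by move=> y /andP[_]; rewrite mem_rem_uniq // => /andP[/negbTE /= ->].
rewrite big1_seq; first by apply/count_memPn; apply: contra xNS; apply: sS.
by move=> y /andP[_ yS] /=; case: eqP => // yx; rewrite -yx yS in xNS.
Qed.

Lemma pairwise_nseq (T : Type) (r : rel T) k x :
  pairwise r (nseq k x) = (k <= 1) || r x x.
Proof.
elim: k => // k IHk; rewrite [nseq _ _]/= pairwise_cons IHk all_nseq.
by case: (r x x); case: k {IHk} => [|[|k]].
Qed.

Lemma allrel_nseq (T S : Type) (r : T -> S -> bool) a b x y :
  allrel r (nseq a x) (nseq b y) = [|| a == 0, b == 0 | r x y].
Proof. by rewrite /allrel all_nseq /= all_nseq. Qed.

Lemma has_typeE n (P : seq {vspace F2n n}) t :
  has_type P t <-> perm_eq [seq \dim U | U <- P] (tally_seq t).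
Proof.
have count_tally d : count_mem d (tally_seq t) = \sum_(p <- t | p.1 == d) p.2.
  rewrite /tally_seq count_flatten -map_comp sumnE big_map [RHS]big_mkcond.
  by apply: eq_bigr => p _; rewrite /= count_nseq /=; case: (p.1 == d); rewrite ?mul1n.
split=> [typeP | /permP permD d].
  by apply/allP=> d _; apply/eqP; rewrite count_tally -typeP count_map.
by rewrite -count_tally -permD count_map.
Qed.

Section Partitions.

Variable n : nat.
Implicit Types (P : seq {vspace F2n n}) (U V : {vspace F2n n}).

Lemma vs_partitionE P :
  vs_partition P <->
  [/\ {in P, forall U, U != 0%VS},
      pairwise (fun U V => U :&: V == 0)%VS P &
      forall v : F2n n, v != 0%R -> exists2 U, U \in P & v \in U].
Proof.
split=> [[uP nzP coverP] | [nzP capP coverP]].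
  split=> // [|v /coverP[]//]; move: uP; rewrite uniq_pairwise.
  apply: sub_in_pairwise (allss P) => U V PU PV neqUV /=.
  rewrite -subv0; apply/subvP=> v /memv_capP[Uv Vv]; rewrite memv0.
  apply: contraNT neqUV => nz_v; have [_ /(_ U V)-> //] := coverP v nz_v.
have cap0_neq : {in P &, forall U V, U != V -> (U :&: V == 0)%VS}.
  by apply: pairwise_sym_neq capP => U V; rewrite capvC.
split=> [|//|v nz_v].
  rewrite uniq_pairwise; apply: sub_in_pairwise (allss P) capP => U V _ PV /=.
  by apply: contraTneq => ->; rewrite capvv nzP.
split=> [|U1 U2 PU1 PU2 U1v U2v]; first exact: coverP.
apply/eqP; apply: contraNT nz_v => /(cap0_neq _ _ PU1 PU2); rewrite -subv0 => /subvP.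
by move=> /(_ v); rewrite memv_cap U1v U2v memv0 => /(_ isT).
Qed.

Lemma dimv_leF2n U : \dim U <= n.
Proof. by have := dimvS (subvf U); rewrite dimvf dim_matrix mul1r. Qed.

Lemma vs_partition_dim P U : vs_partition P -> U \in P -> 0 < \dim U <= n.
Proof. by case=> _ nzP _ PU; rewrite lt0n dimv_eq0 nzP // dimv_leF2n. Qed.

Lemma vs_partition_pairwise_dim P :
  vs_partition P -> pairwise (fun d e => d + e <= n) [seq \dim U | U <- P].
Proof.
case/vs_partitionE=> _ capP _; rewrite pairwise_map.
apply: sub_pairwise capP => U V /eqP capUV /=.
by rewrite -dimv_disjoint_sum // dimv_leF2n.
Qed.

Lemma vs_partition_count P (v : F2n n) :
  vs_partition P -> v != 0%R -> count (fun U => v \in U) P = 1.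
Proof.
case=> uP _ /(_ v) coverP /coverP[[U PU Uv] uniqP].
rewrite (@eq_in_count _ _ (pred1 U)) ?count_uniq_mem ?PU //.
by move=> V PV /=; apply/idP/eqP=> [Vv|->//]; apply: uniqP.
Qed.

Lemma vs_partition_sum P :
  vs_partition P -> sumn [seq 2 ^ \dim U - 1 | U <- P] = 2 ^ n - 1.
Proof.
move=> partP.
have nonzero_in U : 2 ^ \dim U - 1 = \sum_(v : F2n n | v != 0%R) (v \in U).
  have -> : 2 ^ \dim U = #|U| by rewrite card_vspace card_Fp.
  rewrite (cardD1 0%R) mem0v add1n subn1 -sum1_card big_mkcond [RHS]big_mkcond.
  by apply: eq_bigr => v _; rewrite !inE; case: (v != 0%R); case: (v \in U).
rewrite sumnE big_map (eq_bigr _ (fun U _ => nonzero_in U)) exchange_big /=.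
rewrite (eq_bigr (fun _ => 1)) => [|v nz_v]; last first.
  rewrite -[RHS](vs_partition_count partP nz_v) -sum1_count [RHS]big_mkcond.
  by apply: eq_bigr => U _; case: (v \in U).
have := cardC1 (0%R : F2n n); rewrite card_mx card_Fp // mul1n subn1 sum1dep_card => <-.
by apply: eq_card => v; rewrite !inE.
Qed.

End Partitions.

Lemma even_dims8_classification (D : seq nat) :
  all (fun d => (0 < d <= 8) && ~~ odd d) D ->
  sumn [seq 2 ^ d - 1 | d <- D] = 255 ->
  pairwise (fun d e => d + e <= 8) D ->
  [\/ perm_eq D (tally_seq [:: (8, 1)]),
      perm_eq D (tally_seq [:: (2, 64); (6, 1)]) |
      exists2 i, i <= 17 & perm_eq D (tally_seq [:: (2, 5 * i); (4, 17 - i)])].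
Proof.
move=> dimsD sumD pairD.
have D_sub : {subset D <= [:: 2; 4; 6; 8]}.
  move=> d /(allP dimsD) /andP[/andP[d_gt0 d_le8] even_d]; rewrite !inE.
  by move: d_gt0 d_le8 even_d; do 9?case: d => [|d] //.
have := perm_tally_count (isT : uniq [:: 2; 4; 6; 8]) D_sub; rewrite /=.
move: (count_mem 2 D) (count_mem 4 D) (count_mem 6 D) (count_mem 8 D) => a b c d permD.
rewrite (pairwise_perm _ permD) in pairD; last by move=> x y; rewrite addnC.
rewrite (perm_sumn (perm_map _ permD)) /= !map_cat !sumn_cat !map_nseq !sumn_nseq /= in sumD.
rewrite /= !pairwise_cat !allrel_catr !pairwise_nseq !allrel_nseq !allrel0r /= in pairD.
have c_le1 : c <= 1 by lia.
have bc0 : (b == 0) || (c == 0) by lia.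
have counts : [\/ [/\ a = 0, b = 0, c = 0 & d = 1], [/\ a = 64, b = 0, c = 1 & d = 0] |
           exists2 i, i <= 17 & [/\ a = 5 * i, b = 17 - i, c = 0 & d = 0]].
  case: (posnP d) => [d0 | d_gt0]; last by apply: Or31; split; lia.
  case: (posnP c) => [c0 | c_gt0]; last by apply: Or32; split; lia.
  by apply: Or33; exists (17 - b); [lia | split; lia].
move: permD; case: counts => [[-> -> -> ->] | [-> -> -> ->] | [i le_i17 [-> -> -> ->]]] permD;
  [apply: Or31 | apply: Or32 | apply: Or33; exists i => //];
  by rewrite (permPl permD) /= perm_refl.
Qed.

Lemma even_vs_partition8_type (P : seq {vspace F2n 8}) :
  vs_partition P -> (forall U, U \in P -> ~~ odd (\dim U)) ->
  [\/ has_type P [:: (8, 1)],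
      has_type P [:: (2, 64); (6, 1)] |
      exists2 i, i <= 17 & has_type P [:: (2, 5 * i); (4, 17 - i)]].
Proof.
move=> partP evenP.
have dimsD : all (fun d => (0 < d <= 8) && ~~ odd d) [seq \dim U | U <- P].
  by apply/allP=> _ /mapP[U PU ->]; rewrite (vs_partition_dim partP PU) evenP.
have sumD : sumn [seq 2 ^ d - 1 | d <- [seq \dim U | U <- P]] = 255.
  by rewrite -map_comp (vs_partition_sum partP).
case: (even_dims8_classification dimsD sumD (vs_partition_pairwise_dim partP)).
- by move=> typeD; apply: Or31; apply/has_typeE.
- by move=> typeD; apply: Or32; apply/has_typeE.
- by case=> i le_i17 typeD; apply: Or33; exists i => //; apply/has_typeE.
Qed.

Fixpoint span_codes (B : seq nat) : seq nat :=
  if B is b :: B' then span_codes B' ++ map (Nat.lxor b) (span_codes B') else [:: 0].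

Lemma mem0_span_codes B : 0 \in span_codes B.
Proof. by elim: B => [|b B IHB] //=; rewrite mem_cat IHB. Qed.

Fixpoint free_codes (B : seq nat) : bool :=
  if B is b :: B' then (b \notin span_codes B') && free_codes B' else true.

Definition trivial_meet (S T : seq nat) : bool :=
  all (fun m => (m == 0) || (m \notin T)) S.

Section BitCodes.

Variable n : nat.

Definition vec (m : nat) : F2n n := \row_(i < n) (Nat.testbit m i)%:R%R.

Lemma vec_lxor a b : vec (Nat.lxor a b) = (vec a + vec b)%R.
Proof.
apply/rowP=> i; rewrite !mxE PeanoNat.Nat.lxor_spec.
by case: (Nat.testbit a i); case: (Nat.testbit b i); rewrite ?addr0 ?add0r //; apply/val_inj.
Qed.

Lemma vec_inj a b : a < 2 ^ n -> b < 2 ^ n -> vec a = vec b -> a = b.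
Proof.
move=> lt_a lt_b /rowP eq_ab; apply: PeanoNat.Nat.bits_inj => i.
have [lt_in | le_ni] := ltnP i n.
  have := eq_ab (Ordinal lt_in); rewrite !mxE.
  by case: (Nat.testbit a i); case: (Nat.testbit b i) => // /val_eqP.
have high m : m < 2 ^ n -> Nat.testbit m i = false.
  have -> : 2 ^ n = Nat.pow 2 n by elim: (n) => // k IHk; rewrite expnS IHk.
  move=> /ltP lt_m; rewrite -(PeanoNat.Nat.mod_small _ _ lt_m).
  by apply: PeanoNat.Nat.mod_pow2_bits_high; apply/leP.
by rewrite !high.
Qed.

Lemma vec_onto (v : F2n n) : exists2 m, m < 2 ^ n & v = vec m.
Proof.
have inj_vec : injective (fun i : 'I_(2 ^ n) => vec i).
  by move=> i j /vec_inj eq_ij; apply/val_inj/eq_ij.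
have := inj_card_onto inj_vec; rewrite card_mx card_Fp // card_ord mul1n.
by move=> /(_ (leqnn _) v) /codomP[i ->]; exists i.
Qed.

Lemma vec0 : vec 0 = 0%R.
Proof. by apply/rowP=> i; rewrite !mxE PeanoNat.Nat.bits_0. Qed.

Definition code_span (B : seq nat) : {vspace F2n n} := <<map vec B>>%VS.

Lemma code_spanP B v :
  reflect (exists2 m, m \in span_codes B & v = vec m) (v \in code_span B).
Proof.
rewrite /code_span; elim: B v => [|b B IHB] v /=.
  rewrite span_nil memv0; apply: (iffP eqP) => [->|[m]]; first by exists 0; rewrite ?vec0.
  by rewrite inE => /eqP-> ->; rewrite vec0.
rewrite span_cons; apply: (iffP memv_addP) => [|[m]].
  case=> _ /vlineP[k ->] [w /(IHB w)[m Bm ->] ->].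
  have [-> | ->] : k = 0%R \/ k = 1%R.
    by case: k => [[|[|k]] //= lt_k]; [left | right]; apply: val_inj.
    by exists m; rewrite ?scale0r ?add0r // mem_cat Bm.
  by exists (Nat.lxor b m); rewrite ?scale1r ?vec_lxor // mem_cat map_f ?orbT.
rewrite mem_cat => /orP[Bm | /mapP[m' Bm' ->]] ->.
  exists 0%R; first exact: mem0v.
  by exists (vec m); [apply/(IHB (vec m)); exists m | rewrite add0r].
exists (vec b); first exact: memv_line.
by exists (vec m'); [apply/(IHB (vec m')); exists m' | rewrite vec_lxor].
Qed.

Lemma mem_code_span B m :
  all (fun x => x < 2 ^ n) (span_codes B) -> m < 2 ^ n ->
  (vec m \in code_span B) = (m \in span_codes B).
Proof.
move=> /allP lt_B lt_m; apply/code_spanP/idP => [[x Bx /vec_inj->] // | Bm].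
  exact: lt_B.
by exists m.
Qed.

Lemma dim_code_span B :
  all (fun x => x < 2 ^ n) (span_codes B) -> free_codes B -> \dim (code_span B) = size B.
Proof.
move=> lt_B free_B; rewrite -(size_map vec); apply/eqP; rewrite -/(free _).
elim: B lt_B free_B => [|b B IHB] /=; first by rewrite nil_free.
rewrite all_cat => /andP[lt_B lt_bB] /andP[bNB free_B].
rewrite free_cons IHB // andbT -/(code_span B) mem_code_span //.
apply: (allP lt_bB); have := map_f (Nat.lxor b) (mem0_span_codes B).
by rewrite PeanoNat.Nat.lxor_0_r.
Qed.

Definition basis_codes (B : seq nat) : bool :=
  [&& 0 < size B, free_codes B & all (fun m => m < 2 ^ n) (span_codes B)].

(* The [let] makes [vm_compute] build each span only once. *)
Definition partition_codes (Bs : seq (seq nat)) : bool :=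
  all basis_codes Bs &&
  let Ss := map span_codes Bs in
  pairwise trivial_meet Ss && all (fun m => has (fun S => m \in S) Ss) (iota 1 (2 ^ n).-1).

Lemma partition_codesP Bs : partition_codes Bs -> vs_partition (map code_span Bs).
Proof.
case/andP=> allBs /andP[meetBs coverBs]; have basisBs := allP allBs.
apply/vs_partitionE; split.
- move=> _ /mapP[B /basisBs /and3P[size_B free_B lt_B] ->].
  by rewrite -dimv_eq0 dim_code_span // -lt0n.
- rewrite pairwise_map in meetBs; rewrite pairwise_map.
  apply: (sub_in_pairwise (P := basis_codes) _ allBs meetBs).
  move=> B C /and3P[_ _ lt_B] /and3P[_ _ lt_C] /allP meetBC.
  rewrite /= -subv0; apply/subvP=> _ /memv_capP[/code_spanP[m Bm ->]].
  rewrite mem_code_span ?(allP lt_B) // memv0 => Cm.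
  by move: (meetBC m Bm); rewrite Cm orbF => /eqP->; rewrite vec0.
move=> v nz_v; have [m lt_m def_v] := vec_onto v.
have: m \in iota 1 (2 ^ n).-1.
  rewrite mem_iota lt0n add1n prednK ?expn_gt0 // lt_m andbT.
  by apply: contraNneq nz_v => m0; rewrite def_v m0 vec0.
case/(allP coverBs)/hasP=> _ /mapP[B Bs_B ->] Bm.
exists (code_span B); first exact: map_f.
by case/and3P: (basisBs B Bs_B) => _ _ lt_B; rewrite def_v mem_code_span ?(allP lt_B).
Qed.

Definition realizes_type (Bs : seq (seq nat)) (t : seq (nat * nat)) : bool :=
  partition_codes Bs && perm_eq [seq size B | B <- Bs] (tally_seq t).

Lemma realizes_type_exists Bs t :
  realizes_type Bs t -> exists P : seq {vspace F2n n}, vs_partition P /\ has_type P t.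
Proof.
case/andP=> partBs sizesBs; exists (map code_span Bs); split; first exact: partition_codesP.
have dimsBs : [seq \dim (code_span B) | B <- Bs] = [seq size B | B <- Bs].
  apply/eq_in_map=> B; case/andP: partBs => /allP basisBs _.
  by case/basisBs/and3P=> _ free_B lt_B; apply: dim_code_span.
by apply/has_typeE; rewrite -map_comp dimsBs.
Qed.

End BitCodes.

(* F_16 = F_2[x]/(x^4 + x + 1) on 4-bit codes; [omega16] = x^2 + x is a primitive
   cube root of unity, so that F_4 = {0, 1, 6, 7}. A pair (x, y) of F_16^2 = F_2^8
   is coded by x + 16 y. *)
Definition mulx16 (a : nat) : nat := if a < 8 then a.*2 else Nat.lxor a.*2 19.

Fixpoint mul16_rec (k a b : nat) : nat :=
  if k is k'.+1 then Nat.lxor (if odd b then a else 0) (mul16_rec k' (mulx16 a) b./2) else 0.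

Definition mul16 (a b : nat) : nat := mul16_rec 4 a b.

Definition omega16 : nat := 6.

Definition code16 (x y : nat) : nat := x + 16 * y.

Definition F16_basis : seq nat := [:: 1; 2; 4; 8].

(* 1, x, x^2, x^3, x^4 represent the five cosets of F_4^* in F_16^*. *)
Definition F4_lines : seq (seq nat) :=
  [seq [:: b; mul16 omega16 b] | b <- [:: 1; 2; 4; 8; 3]].

(* Parametrisations of the 17 F_16-lines {(e, m e)} and {(0, e)} of F_16^2. *)
Definition spread_maps : seq (nat -> nat) :=
  [seq (fun e => code16 e (mul16 m e)) | m <- iota 0 16] ++ [:: code16 0].

Definition spread_partition (i : nat) : seq (seq nat) :=
  flatten [seq [seq map f L | L <- F4_lines] | f <- take i spread_maps] ++
  [seq map f F16_basis | f <- drop i spread_maps].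

(* The F_4-hyperplane F_16 x F_4 and the F_4-lines through the points (u, y) with
   y in x + F_4 = {2, 3, 4, 5}. *)
Definition hyperplane_partition : seq (seq nat) :=
  ([seq code16 e 0 | e <- F16_basis] ++ [:: code16 0 1; code16 0 omega16]) ::
  [seq [:: code16 u y; code16 (mul16 omega16 u) (mul16 omega16 y)]
    | u <- iota 0 16, y <- [:: 2; 3; 4; 5]].

Definition full_partition : seq (seq nat) := [:: [seq 2 ^ i | i <- iota 0 8]].

Lemma spread_partition_realizes :
  all (fun i => realizes_type 8 (spread_partition i) [:: (2, 5 * i); (4, 17 - i)])
      (iota 0 18).
Proof. by vm_compute. Qed.

Theorem mainTheorem10 :
  (forall P : seq {vspace F2n 8},
     vs_partition P ->
     (forall U, U \in P -> ~~ odd (\dim U)) ->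
     [\/ has_type P [:: (8, 1)],
         has_type P [:: (2, 64); (6, 1)] |
         exists2 i, (i <= 17)%N & has_type P [:: (2, 5 * i); (4, 17 - i)]%N])
  /\
  [/\ (exists P : seq {vspace F2n 8}, vs_partition P /\ has_type P [:: (8, 1)]),
      (exists P : seq {vspace F2n 8}, vs_partition P /\ has_type P [:: (2, 64); (6, 1)]) &
      (forall i, (i <= 17)%N ->
         exists P : seq {vspace F2n 8},
           vs_partition P /\ has_type P [:: (2, 5 * i); (4, 17 - i)]%N)].
Proof.
split; first exact: even_vs_partition8_type.
split=> [| | i le_i17].
- by apply: (realizes_type_exists (Bs := full_partition)); vm_compute.
- by apply: (realizes_type_exists (Bs := hyperplane_partition)); vm_compute.
- apply: (realizes_type_exists (Bs := spread_partition i)).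
  by apply: (allP spread_partition_realizes); rewrite mem_iota.
Qed.
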